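(* Let $(W,S)$ be a Coxeter system with $S$ finite, $\phi:\operatorname{Ad}(Q_W)\to W$ the homomorphism $e_x\mapsto x$, and $C_W=\ker\phi$. Then $C_W$ is a central subgroup of $\operatorname{Ad}(Q_W)$.
   Context: A Coxeter system $(W,S)$: $S$ finite, $m:S\times S\to\mathbb{N}\cup\{\infty\}$ with $m(s,s)=1$, $2\le m(s,t)=m(t,s)\le\infty$ for $s\ne t$, $W=\langle s\in S\mid (st)^{m(s,t)}=1\ (m(s,t)<\infty)\rangle$. The Coxeter quandle is $Q_W=\bigcup_{w\in W}w^{-1}Sw$ with $x\ast y=yxy$, and $\operatorname{Ad}(Q_W)=\langle e_x\ (x\in Q_W)\mid e_y^{-1}e_xe_y=e_{x\ast y}\rangle$; $\phi$ is well defined. *)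

(* groups given by presentations are
   encoded as words modulo the congruence generated by the relators. *)
From mathcomp Require Import all_boot.
Set Implicit Arguments. Unset Strict Implicit. Unset Printing Implicit Defensive.

Inductive cong (A : Type) (R : seq A -> seq A -> Prop) : seq A -> seq A -> Prop :=
| cong_base u v : R u v -> cong R u v
| cong_refl u : cong R u u
| cong_sym u v : cong R u v -> cong R v u
| cong_trans u v w : cong R u v -> cong R v w -> cong R u w
| cong_ctx a b u v : cong R u v -> cong R (a ++ u ++ b) (a ++ v ++ b).

(* Coxeter matrix: None stands for infinity. *)
Definition coxeter_matrix (S : finType) (m : S -> S -> option nat) : Prop :=
  (forall s, m s s = Some 1%N) /\
  (forall s t, m s t = m t s) /\
  (forall s t k, s <> t -> m s t = Some k -> 2 <= k).

Definition W_rel (S : finType) (m : S -> S -> option nat) (u v : seq S) : Prop :=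
  exists s t k, m s t = Some k /\ u = flatten (nseq k [:: s; t]) /\ v = [::].

Definition weq (S : finType) (m : S -> S -> option nat) : seq S -> seq S -> Prop :=
  cong (W_rel m).

(* A pair (w, s) represents the element w^{-1} s w of Q_W (as a word; the
   inverse of a word in involutive generators is its reverse).  Every
   element of Q_W is of this form. *)
Definition refl_word (S : finType) (p : seq S * S) : seq S := rev p.1 ++ p.2 :: p.1.

(* Quandle operation x * y = y x y on representatives:
   (w'^{-1} s' w')(w^{-1} s w)(w'^{-1} s' w') = u^{-1} s u, u = w w'^{-1} s' w'. *)
Definition qop (S : finType) (p q : seq S * S) : seq S * S :=
  (p.1 ++ refl_word q, p.2).

(* Letters of Ad(Q_W): (representative, sign); sign true = e_x, false = e_x^{-1}. *)
Definition Ad_rel (S : finType) (m : S -> S -> option nat)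
  (u v : seq ((seq S * S) * bool)) : Prop :=
  (exists p b, u = [:: (p, b); (p, ~~ b)] /\ v = [::]) \/
  (* generators indexed by elements of Q_W: e_p = e_q when p, q represent
     the same element of W *)
  (exists p q, weq m (refl_word p) (refl_word q) /\ u = [:: (p, true)] /\ v = [:: (q, true)]) \/
  (exists p q, u = [:: (q, false); (p, true); (q, true)] /\ v = [:: (qop p q, true)]).

Definition adeq (S : finType) (m : S -> S -> option nat) :
  seq ((seq S * S) * bool) -> seq ((seq S * S) * bool) -> Prop := cong (Ad_rel m).

Definition phi (S : finType) (a : seq ((seq S * S) * bool)) : seq S :=
  flatten (map (fun l : (seq S * S) * bool =>
    if l.2 then refl_word l.1 else rev (refl_word l.1)) a).

(* For every x in Q_W and a in Ad(Q_W) one has e_x a = a e_{x * phi(a)}, where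
   x * w := w^{-1} x w: move e_x to the right one letter at a time using the
   quandle relation.  If phi(a) = 1 then x * phi(a) = x, so a commutes with every
   generator e_x, hence with their inverses and with all of Ad(Q_W). *)
From mathcomp Require Import all_boot.
Set Implicit Arguments. Unset Strict Implicit. Unset Printing Implicit Defensive.

Section Congruence.
Variables (A : Type) (R : seq A -> seq A -> Prop).

Lemma cong_catl (a u v : seq A) : cong R u v -> cong R (a ++ u) (a ++ v).
Proof. by move=> /(cong_ctx a [::]); rewrite !cats0. Qed.

Lemma cong_catr (b u v : seq A) : cong R u v -> cong R (u ++ b) (v ++ b).
Proof. exact: cong_ctx [::] b u v. Qed.

Lemma cong_comm_cat (a x y : seq A) :
  cong R (a ++ x) (x ++ a) -> cong R (a ++ y) (y ++ a) ->
  cong R (a ++ x ++ y) ((x ++ y) ++ a).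
Proof.
move=> ax ay; rewrite [a ++ _]catA.
apply: cong_trans (cong_catr y ax) _; rewrite -!catA.
exact: cong_catl.
Qed.

Lemma cong_comm_inv (a x y : seq A) :
  cong R (x ++ y) [::] -> cong R (y ++ x) [::] ->
  cong R (a ++ x) (x ++ a) -> cong R (a ++ y) (y ++ a).
Proof.
move=> xy yx ax.
have yxa : cong R (y ++ x ++ a ++ y) (a ++ y).
  by have := cong_ctx [::] (a ++ y) yx; rewrite /= -catA.
apply: cong_trans (cong_sym yxa) _.
have := cong_ctx y y (cong_sym ax); rewrite -!catA => /cong_trans; apply.
by have := cong_ctx (y ++ a) [::] xy; rewrite !cats0 -!catA.
Qed.

End Congruence.

Lemma refl_word_rev (S : finType) (p : seq S * S) : rev (refl_word p) = refl_word p.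
Proof. by rewrite /refl_word rev_cat rev_cons revK -cats1 -catA. Qed.

Lemma refl_word_conj (S : finType) (p : seq S * S) (u : seq S) :
  refl_word (p.1 ++ u, p.2) = rev u ++ refl_word p ++ u.
Proof. by rewrite /refl_word /= rev_cat -!catA. Qed.

Section Coxeter.
Variables (S : finType) (m : S -> S -> option nat).
Hypothesis hm : coxeter_matrix m.

Lemma weq_rev (u v : seq S) : weq m u v -> weq m (rev u) (rev v).
Proof.
case: hm => _ [m_sym _]; elim=> {u v}.
- move=> _ _ [s [t [k [mst [-> ->]]]]]; apply: cong_base.
  exists t, s, k; split; first by rewrite m_sym.
  by rewrite rev_flatten map_nseq rev_nseq.
- by move=> u; apply: cong_refl.
- by move=> u v _; apply: cong_sym.
- by move=> u v w _ uv _; apply: cong_trans uv.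
- by move=> a b u v _ uv; rewrite !rev_cat -!catA; apply: cong_ctx.
Qed.

Lemma weq_sqr (s : S) : weq m [:: s; s] [::].
Proof. by case: hm => mss _; apply: cong_base; exists s, s, 1. Qed.

Lemma weq_cat_rev (w : seq S) : weq m (w ++ rev w) [::].
Proof.
elim: w => [|t w IH] /=; first exact: cong_refl.
rewrite rev_cons -cats1; apply: cong_trans (weq_sqr t).
by have := cong_ctx [:: t] [:: t] IH; rewrite -catA.
Qed.

Lemma weq_refl_word_sqr (p : seq S * S) : weq m (refl_word p ++ refl_word p) [::].
Proof. by have := weq_cat_rev (refl_word p); rewrite refl_word_rev. Qed.

Lemma weq_refl_word_conj (p : seq S * S) (u : seq S) :
  weq m u [::] -> weq m (refl_word (p.1 ++ u, p.2)) (refl_word p).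
Proof.
move=> u1; rewrite refl_word_conj.
have := cong_ctx [::] (refl_word p ++ u) (weq_rev u1) => /cong_trans; apply.
by have := cong_ctx (refl_word p) [::] u1; rewrite !cats0.
Qed.

End Coxeter.

Section Adjoint.
Variables (S : finType) (m : S -> S -> option nat).
Hypothesis hm : coxeter_matrix m.

Local Notation letter := ((seq S * S) * bool)%type.

Lemma adeq_cancel (p : seq S * S) (b : bool) : adeq m [:: (p, b); (p, ~~ b)] [::].
Proof. by apply: cong_base; left; exists p, b. Qed.

Lemma adeq_conj (p q : seq S * S) :
  adeq m [:: (q, false); (p, true); (q, true)] [:: (qop p q, true)].
Proof. by apply: cong_base; right; right; exists p, q. Qed.

Lemma adeq_gen (p q : seq S * S) :
  weq m (refl_word p) (refl_word q) -> adeq m [:: (p, true)] [:: (q, true)].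
Proof. by move=> pq; apply: cong_base; right; left; exists p, q. Qed.

Lemma adeq_gen_conj (p : seq S * S) (u : seq S) :
  weq m u [::] -> adeq m [:: ((p.1 ++ u, p.2), true)] [:: (p, true)].
Proof. by move=> u1; apply/adeq_gen/weq_refl_word_conj. Qed.

Lemma adeq_swap_pos (p q : seq S * S) :
  adeq m [:: (p, true); (q, true)] [:: (q, true); (qop p q, true)].
Proof.
apply: cong_trans (cong_catr _ (cong_sym (adeq_cancel q true))) _.
exact: cong_catl [:: (q, true)] _ _ (adeq_conj p q).
Qed.

(* qop (qop p q) q represents p, since refl_word q is an involution in W. *)
Lemma adeq_swap_neg (p q : seq S * S) :
  adeq m [:: (p, true); (q, false)] [:: (q, false); (qop p q, true)].
Proof.
have rq_p : adeq m [:: (qop (qop p q) q, true)] [:: (p, true)].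
  by rewrite /qop -catA; apply/adeq_gen_conj/weq_refl_word_sqr.
apply: cong_sym.
apply: cong_trans (cong_catl [:: (q, false); (qop p q, true)]
                     (cong_sym (adeq_cancel q true))) _.
exact: cong_catr [:: (q, false)] _ _ (cong_trans (adeq_conj _ q) rq_p).
Qed.

Lemma adeq_swap (p q : seq S * S) (b : bool) :
  adeq m [:: (p, true); (q, b)] [:: (q, b); (qop p q, true)].
Proof. by case: b; [apply: adeq_swap_pos | apply: adeq_swap_neg]. Qed.

Lemma phi_cons (l : letter) (a : seq letter) : phi (l :: a) = refl_word l.1 ++ phi a.
Proof. by case: l => p [|]; rewrite /phi //= refl_word_rev. Qed.

Lemma adeq_slide (a : seq letter) (p : seq S * S) :
  adeq m ((p, true) :: a) (a ++ [:: ((p.1 ++ phi a, p.2), true)]).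
Proof.
elim: a p => [|[q b] a IH] p /=; first by rewrite cats0 -surjective_pairing; apply: cong_refl.
apply: cong_trans (cong_catr a (adeq_swap p q b)) _.
by have := cong_catl [:: (q, b)] (IH (qop p q)); rewrite phi_cons /= catA.
Qed.

Lemma adeq_kernel_comm_gen (a : seq letter) (p : seq S * S) :
  weq m (phi a) [::] -> adeq m (a ++ [:: (p, true)]) ([:: (p, true)] ++ a).
Proof.
move=> a1; apply: cong_sym; apply: cong_trans (adeq_slide a p) _.
exact/cong_catl/adeq_gen_conj.
Qed.

Lemma adeq_kernel_comm_letter (a : seq letter) (l : letter) :
  weq m (phi a) [::] -> adeq m (a ++ [:: l]) ([:: l] ++ a).
Proof.
case: l => p [|] a1; first exact: adeq_kernel_comm_gen.
apply: (@cong_comm_inv _ _ _ [:: (p, true)]).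
- exact: adeq_cancel p true.
- exact: adeq_cancel p false.
- exact: adeq_kernel_comm_gen.
Qed.

End Adjoint.

Theorem lemma2p5 (S : finType) (m : S -> S -> option nat)
  (hm : coxeter_matrix m) :
  forall a : seq ((seq S * S) * bool), weq m (phi a) [::] ->
  forall b : seq ((seq S * S) * bool), adeq m (a ++ b) (b ++ a).
Proof.
move=> a a1; elim=> [|l b IH]; first by rewrite cats0; apply: cong_refl.
exact: cong_comm_cat [:: l] b (adeq_kernel_comm_letter hm l a1) IH.
Qed.
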